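(* Let $K$ be a field, $c\in K\setminus\{0\}$, $n\ge1$, let $f$ be a $c$-frieze of order $n$ over $K$, and put $s=f(0,n)$, $t=f(1,n+1)$. Then for every integer $k$ with $-1\le k\le n+2$ and every $i\in\mathbb{Z}$: (a) $f(2i,2i+k-1)=\dfrac{(-c)^k}{t}f(2i+k+1,2i+n+1)$; (b) $f(2i+1,2i+k)=\dfrac{(-c)^k}{s}f(2i+k+2,2i+n+2)$.
   Context: The $c$-continuant polynomials $P_k=P_k^c$ ($k\ge-1$) are defined by $P_{-1}=0$, $P_0=1$, and for $k\ge1$, $P_k(x_1,\dots,x_k)=x_kP_{k-1}(x_1,\dots,x_{k-1})+cP_{k-2}(x_1,\dots,x_{k-2})$. A family $(x_i)_{i\in\mathbb{Z}}$ in $K$ is $n$-admissible if $P_{n+2}(x_i,\dots,x_{i+n+1})=0$ for all $i$. Let $\mathbb{B}_n=\{(i,j)\in\mathbb{Z}^2:-2\le j-i\le n+1\}$. A $c$-frieze of order $n$ is a function $f:\mathbb{B}_n\to K$ for which there is an $n$-admissible family $(x_i)$ with $f(i,j)=P_{j-i+1}(x_i,\dots,x_j)$ for all $(i,j)\in\mathbb{B}_n$. Row $k$ of $f$ consists of the values $f(i,i+k-1)$; the lemma relates row $k$ to row $n-k+1$. It is known that $st=(-c)^{n+1}$, so $s,t\neq0$. *)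

From HB Require Import structures.
From mathcomp Require Import all_boot all_order all_algebra.
Set Implicit Arguments. Unset Strict Implicit. Unset Printing Implicit Defensive.
Import Order.TTheory GRing.Theory Num.Theory.
Local Open Scope ring_scope.

(* cont c x i k = P_k^c(x_i, x_{i+1}, ..., x_{i+k-1})  for k : nat *)
Fixpoint cont (K : fieldType) (c : K) (x : int -> K) (i : int) (k : nat) : K :=
  match k with
  | 0%N => 1
  | 1%N => x i
  | (k'.+1 as k1).+1 => x (i + k1%:Z) * cont c x i k1 + c * cont c x i k'
  end.

(* contZ c x i m = P_m^c(x_i, ..., x_{i+m-1}) for m : int, m >= -1,
   with P_{-1} = 0 (value 0 also for m < -1, never used). *)
Definition contZ (K : fieldType) (c : K) (x : int -> K) (i : int) (m : int) : K :=
  match m with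
  | Posz k => cont c x i k
  | Negz _ => 0
  end.

Definition admissible (K : fieldType) (c : K) (n : nat) (x : int -> K) : Prop :=
  forall i : int, cont c x i n.+2 = 0.

Definition inB (n : nat) (i j : int) : bool :=
  (-2 <= j - i) && (j - i <= n%:Z + 1).

Definition is_frieze (K : fieldType) (c : K) (n : nat) (f : int -> int -> K) : Prop :=
  exists x : int -> K, admissible c n x /\
    forall i j : int, inB n i j -> f i j = contZ c x i (j - i + 1).

From HB Require Import structures.
From mathcomp Require Import all_boot all_order all_algebra.
From mathcomp Require Import zify ring.
Set Implicit Arguments.
Unset Strict Implicit.
Unset Printing Implicit Defensive.
Import Order.TTheory GRing.Theory Num.Theory.
Local Open Scope ring_scope.

(* Let p(a) = P_{n+1}(x_{a+1}, ..., x_{a+n+1}) be the last nontrivial row of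
   the frieze.  Expanding continuants on the right on one side and on the
   left on the other, admissibility (the case m = 0) propagates to the glide
   identity  -c p(a) P_{m-1}(x_a, ...) = (-c)^m P_{n+2-m}(x_{a+m}, ...)  for
   0 <= m <= n+3.  For m = n+2 it reads p(a) p(a-1) = (-c)^{n+1}, so p never
   vanishes and is 2-periodic, whence t = p(2i) and s = p(2i+1). *)

Lemma periodic_int (T : Type) (g : int -> T) (p : int) :
  (forall a, g (a + p) = g a) -> forall a i, g (a + p * i) = g a.
Proof.
move=> gP a; elim/int_rec => [|j IH|j IH]; first by rewrite mulr0 addr0.
  by rewrite -IH -[g (a + p * j)]gP intS; congr g; ring.
by rewrite -IH -(gP (a + p * - j.+1%:Z)) intS; congr g; ring.
Qed.

Section Continuants.
Variables (K : fieldType) (c : K) (x : int -> K).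

Lemma cont_recr (k : nat) (i : int) :
  cont c x i k.+2 = x (i + k.+1) * cont c x i k.+1 + c * cont c x i k.
Proof. by []. Qed.

Lemma cont_recl (k : nat) (i : int) :
  cont c x i k.+2 = x i * cont c x (i + 1) k.+1 + c * cont c x (i + 2) k.
Proof.
elim/ltn_ind: k i => -[|[|k]] IH i; first by rewrite /=; ring.
  by rewrite /= (_ : i + 1 + 1 = i + 2); [ring | lia].
rewrite [LHS]cont_recr (IH k.+1 _ i) // (IH k _ i) // [cont _ _ (i + 1) k.+3]cont_recr.
rewrite [cont _ _ (i + 2) k.+2]cont_recr.
rewrite (_ : i + 1 + k.+2%:Z = i + k.+3%:Z); last by lia.
rewrite (_ : i + 2 + k.+1%:Z = i + k.+3%:Z); last by lia.
ring.
Qed.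

Lemma contZ_nat (i : int) (k : nat) : contZ c x i k = cont c x i k.
Proof. by []. Qed.

Lemma contZ_recr (i : int) (m : nat) :
  contZ c x i m.+1 = x (i + m) * contZ c x i m + c * contZ c x i (m%:Z - 1).
Proof.
case: m => [|m]; first by rewrite /= addr0; ring.
by rewrite (_ : m.+1%:Z - 1 = m); last lia.
Qed.

Lemma contZ_recl (i : int) (m : nat) :
  contZ c x i m.+1 = x i * contZ c x (i + 1) m + c * contZ c x (i + 2) (m%:Z - 1).
Proof.
case: m => [|m]; first by rewrite /=; ring.
by rewrite (_ : m.+1%:Z - 1 = m); [exact: cont_recl | lia].
Qed.

Variable n : nat.
Hypothesis x_adm : admissible c n x.

Definition last_row (a : int) : K := cont c x (a + 1) n.+1.

Lemma last_row_glide (a : int) (m : nat) : (m <= n.+3)%N ->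
  - c * last_row a * contZ c x a (m%:Z - 1)
  = (- c) ^+ m * contZ c x (a + m%:Z) (n%:Z + 2 - m%:Z).
Proof.
elim/ltn_ind: m => -[|[|m]] IH lemn.
- rewrite /= mulr0 mul1r addr0 (_ : (n + (1 + 1))%N = n.+2); last lia.
  by rewrite addn0 x_adm.
- by rewrite /= (_ : n%:Z + 2 - 1 = n.+1); [rewrite expr1 mulr1 | lia].
have IH1 := IH m.+1 (ltnSn _) (ltnW lemn).
have IH0 := IH m (ltnW (ltnSn _)) (ltnW (ltnW lemn)).
rewrite (_ : m.+1%:Z - 1 = m) in IH1; last by lia.
rewrite (_ : m.+2%:Z - 1 = m.+1); last by lia.
rewrite contZ_recr.
have -> : - c * last_row a * (x (a + m%:Z) * contZ c x a m + c * contZ c x a (m%:Z - 1))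
  = x (a + m%:Z) * (- c * last_row a * contZ c x a m)
    + c * (- c * last_row a * contZ c x a (m%:Z - 1)) by ring.
rewrite IH1 IH0 (_ : n%:Z + 2 - m%:Z = (n.+1 - m)%N.+1); last by lia.
rewrite contZ_recl.
rewrite (_ : (n.+1 - m)%N%:Z = n%:Z + 2 - m.+1%:Z); last by lia.
rewrite (_ : n%:Z + 2 - m.+1%:Z - 1 = n%:Z + 2 - m.+2%:Z); last by lia.
rewrite (_ : a + m%:Z + 1 = a + m.+1%:Z); last by lia.
rewrite (_ : a + m%:Z + 2 = a + m.+2%:Z); last by lia.
rewrite !exprS; ring.
Qed.

Variable f : int -> int -> K.
Hypothesis f_cont : forall i j : int, inB n i j -> f i j = contZ c x i (j - i + 1).

Lemma frieze_last_row (i j : int) : j - i = n%:Z -> f i j = last_row (i - 1).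
Proof.
move=> ji; rewrite f_cont; last by rewrite /inB; lia.
rewrite ji (_ : n%:Z + 1 = n.+1%:Z); last by lia.
by rewrite contZ_nat /last_row subrK.
Qed.

Hypothesis c_neq0 : c != 0.

Lemma oppc_neq0 : - c != 0.
Proof. by rewrite oppr_eq0. Qed.

Lemma last_row_mul_pred (a : int) : last_row a * last_row (a - 1) = (- c) ^+ n.+1.
Proof.
have := @last_row_glide a n.+2 (leqnSn n.+2).
rewrite (_ : n.+2%:Z - 1 = n.+1); last by lia.
rewrite (_ : n%:Z + 2 - n.+2%:Z = 0); last by lia.
rewrite !contZ_nat mulr1 (_ : cont c x a n.+1 = last_row (a - 1)); last by congr cont; lia.
by rewrite exprS -mulrA => /(mulfI oppc_neq0).
Qed.

Lemma last_row_neq0 (a : int) : last_row a != 0.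
Proof.
have : (- c) ^+ n.+1 != 0 by rewrite expf_neq0 // oppc_neq0.
by rewrite -(last_row_mul_pred a); apply: contra_neq => ->; rewrite mul0r.
Qed.

Lemma last_row_shift2 (a : int) : last_row (a + 2) = last_row a.
Proof.
have := last_row_mul_pred (a + 2); have := last_row_mul_pred (a + 1).
rewrite (_ : a + 2 - 1 = a + 1); last by lia.
rewrite (_ : a + 1 - 1 = a); last by lia.
by rewrite [in X in X -> _]mulrC => <- /(mulIf (last_row_neq0 (a + 1))).
Qed.

Lemma contZ_glide (a k : int) : -1 <= k -> k <= n%:Z + 2 ->
  contZ c x a k = (- c) ^ k / last_row a * contZ c x (a + k + 1) (n%:Z + 1 - k).
Proof.
move=> k_ge k_le; have [m km] : exists m : nat, k = m%:Z - 1.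
  by exists (absz (k + 1)); lia.
have /last_row_glide glide : (m <= n.+3)%N by lia.
rewrite {}km.
rewrite (_ : a + (m%:Z - 1) + 1 = a + m%:Z); last by lia.
rewrite (_ : n%:Z + 1 - (m%:Z - 1) = n%:Z + 2 - m%:Z); last by lia.
rewrite expfzDr ?oppc_neq0 // exprN1 -exprnP.
apply: (mulfI (mulf_neq0 oppc_neq0 (last_row_neq0 a))).
rewrite glide; field.
by rewrite last_row_neq0 oppc_neq0.
Qed.

Lemma last_row_2periodic (a i : int) : last_row (a + 2 * i) = last_row a.
Proof. exact: (@periodic_int _ last_row 2 last_row_shift2). Qed.

Lemma frieze_glide (a k : int) : -1 <= k -> k <= n%:Z + 2 ->
  f a (a + k - 1) = (- c) ^ k / last_row a * f (a + k + 1) (a + n%:Z + 1).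
Proof.
move=> k_ge k_le; rewrite !f_cont; try by rewrite /inB; lia.
rewrite (_ : a + k - 1 - a + 1 = k); last by lia.
rewrite (_ : a + n%:Z + 1 - (a + k + 1) + 1 = n%:Z + 1 - k); last by lia.
exact: contZ_glide.
Qed.

End Continuants.

Theorem mainTheorem10 (K : fieldType) (c : K) (n : nat) (f : int -> int -> K) :
  c != 0 -> (1 <= n)%N -> is_frieze c n f ->
  let s := f 0 n%:Z in
  let t := f 1 (n%:Z + 1) in
  forall (k i : int), -1 <= k -> k <= n%:Z + 2 ->
    f (2 * i) (2 * i + k - 1) = (- c) ^ k / t * f (2 * i + k + 1) (2 * i + n%:Z + 1)
    /\ f (2 * i + 1) (2 * i + k) = (- c) ^ k / s * f (2 * i + k + 2) (2 * i + n%:Z + 2).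
Proof.
move=> c_neq0 _ [x [x_adm f_cont]] s t k i k_ge k_le.
have t_eq : t = last_row c x n (2 * i).
  rewrite /t (frieze_last_row f_cont); last by lia.
  by rewrite subrr -(last_row_2periodic x_adm c_neq0 0 i) add0r.
have s_eq : s = last_row c x n (2 * i + 1).
  rewrite /s (frieze_last_row f_cont); last by lia.
  by rewrite -(last_row_2periodic x_adm c_neq0 _ (i + 1)); congr last_row; lia.
rewrite t_eq s_eq; split; first exact: frieze_glide.
rewrite (_ : 2 * i + k + 2 = 2 * i + 1 + k + 1); last by lia.
rewrite (_ : 2 * i + n%:Z + 2 = 2 * i + 1 + n%:Z + 1); last by lia.
rewrite (_ : 2 * i + k = 2 * i + 1 + k - 1); last by lia.
exact: frieze_glide.
Qed.
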